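(* Let $c>0$. Then, as $r\to\infty$, $$\log\Big(\sum_{k=0}^\infty\frac{c^k}{k!}e^{-c}e^{-r/(k+1)}\Big)\sim-\sqrt{2r\log r},$$ i.e. the ratio of the two sides tends to $1$. *)

From Stdlib Require Import Reals Arith.
From Coquelicot Require Import Coquelicot.
Open Scope R_scope.

Definition term (c r : R) (k : nat) : R :=
  c ^ k / INR (Factorial.fact k) * exp (- c) * exp (- r / INR (k + 1)).

(* S(r) = sum_{k>=0} term c r k  (Coquelicot's Series = limit of partial sums;
   the series converges for every c, r since terms are positive and bounded by
   the Poisson weights times e^{|r|}). *)
Definition S (c r : R) : R := Series (term c r).

From Stdlib Require Import Reals Arith Lra Lia Psatz.
From Coquelicot Require Import Coquelicot.
Open Scope R_scope.

(* Write m = k + 1 and L = sqrt (2 r ln r).  Stirling-type bounds give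
   (2c)^k / k! <= exp (D m - m ln m), so the k-th summand is at most
   2^-k e^-c exp (D m - m ln m - r/m); maximising this exponent over m >= 1
   (AM-GM around m = sqrt (2 r / ln r)) bounds it by -L (1 - O(ln ln r / ln r)).
   Conversely the single summand at k = floor (L / ln r), where the maximum
   is attained, is at least exp (-L - O(L / ln r)). *)

Lemma exp_le_compat x y : x <= y -> exp x <= exp y.
Proof. intros [H | ->]; [left; apply exp_increasing; exact H | right; reflexivity]. Qed.

Lemma ln_le_sub_one y : 0 < y -> ln y <= y - 1.
Proof. intros Hy. pose proof (exp_ineq1_le (ln y)) as H. rewrite exp_ln in H; lra. Qed.

Lemma le_of_sqr_le x y : 0 <= y -> x * x <= y * y -> x <= y.
Proof. intros Hy Hxy. apply Rsqr_incr_0_var; [exact Hxy | exact Hy]. Qed.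

Lemma le_add_of_sqr_le_4mul p x y : 0 <= x -> 0 <= y -> p * p <= 4 * x * y -> p <= x + y.
Proof.
  intros Hx Hy Hp. pose proof (Rle_0_sqr (x - y)). unfold Rsqr in *.
  apply le_of_sqr_le; nra.
Qed.

(* ln t = 2 ln (sqrt t) <= 2 sqrt t, and 2 <= eta sqrt t. *)
Lemma ln_le_mul (eta t : R) : 0 < eta -> 4 / (eta * eta) <= t -> ln t <= eta * t.
Proof.
  intros Heta Ht.
  assert (Ht4 : 4 <= eta * eta * t).
  { apply (Rmult_le_compat_l (eta * eta)) in Ht; [|nra].
    replace (eta * eta * (4 / (eta * eta))) with 4 in Ht by (field; lra). exact Ht. }
  assert (Ht0 : 0 < t) by nra.
  set (u := sqrt t).
  assert (Hu : u * u = t) by (apply sqrt_sqrt; lra).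
  assert (Hu0 : 0 < u) by (apply sqrt_lt_R0; lra).
  assert (Hln : ln t = 2 * ln u) by (rewrite <- Hu, ln_mult; lra).
  assert (Hetau : 2 <= eta * u) by (apply le_of_sqr_le; nra).
  pose proof (ln_le_sub_one u Hu0). nra.
Qed.

Lemma exp_le_fact n : exp (INR n * ln (INR n) - INR n) <= INR (fact n).
Proof.
  induction n as [|n IH].
  - simpl. rewrite Rmult_0_l, Rminus_0_r, exp_0. lra.
  - rewrite fact_simpl, mult_INR, S_INR.
    destruct (Nat.eq_dec n 0) as [-> | Hn].
    + simpl. rewrite Rplus_0_l, ln_1, Rmult_0_r, Rminus_0_l, Rmult_1_r.
      rewrite <- exp_0 at 2. apply exp_le_compat. lra.
    + set (x := INR n) in *.
      assert (Hx : 1 <= x) by (apply (le_INR 1); lia).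
      assert (Hstep : x * (ln (x + 1) - ln x) <= 1).
      { rewrite <- ln_div by lra.
        pose proof (ln_le_sub_one ((x + 1) / x) ltac:(apply Rdiv_lt_0_compat; lra)).
        replace ((x + 1) / x - 1) with (/ x) in H by (field; lra).
        apply (Rmult_le_compat_l x) in H; [|lra].
        rewrite Rinv_r in H by lra. exact H. }
      apply Rle_trans with (exp (ln (x + 1) + (x * ln x - x))).
      { apply exp_le_compat. nra. }
      rewrite exp_plus, exp_ln by lra.
      apply Rmult_le_compat_l; lra.
Qed.

Lemma pow_div_fact_le a k : 0 < a ->
  a ^ k / INR (fact k) <=
  exp ((Rabs (ln a) + 2) * INR (k + 1) - INR (k + 1) * ln (INR (k + 1))).
Proof.
  intros Ha. set (m := INR (k + 1)).
  assert (Hkm : INR k + 1 = m) by (unfold m; rewrite plus_INR; reflexivity).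
  pose proof (pos_INR k) as Hk0.
  assert (Hfk : 0 < INR (fact k)) by apply (lt_0_INR _ (lt_O_fact k)).
  assert (Hpow : a ^ k <= exp (Rabs (ln a) * m)).
  { rewrite <- (exp_ln (a ^ k)) by (apply pow_lt; exact Ha).
    rewrite ln_pow by exact Ha. apply exp_le_compat.
    pose proof (Rle_abs (ln a)). pose proof (Rabs_pos (ln a)). nra. }
  assert (Hfact : exp (m * ln m - m) <= m * INR (fact k)).
  { pose proof (exp_le_fact (k + 1)) as H. fold m in H.
    rewrite Nat.add_1_r, fact_simpl, mult_INR, <- Nat.add_1_r in H. exact H. }
  assert (Hinv : / INR (fact k) <= exp m * exp (m - m * ln m)).
  { assert (Hcancel : exp (m * ln m - m) * exp (m - m * ln m) = 1).
    { rewrite <- exp_plus, <- exp_0. f_equal. ring. }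
    pose proof (exp_ineq1_le m). pose proof (exp_pos (m - m * ln m)).
    apply (Rmult_le_reg_l (INR (fact k))); [exact Hfk|].
    rewrite Rinv_r by lra.
    apply Rle_trans with (m * INR (fact k) * exp (m - m * ln m)).
    - rewrite <- Hcancel. apply Rmult_le_compat_r; lra.
    - replace (INR (fact k) * (exp m * exp (m - m * ln m)))
        with (exp m * INR (fact k) * exp (m - m * ln m)) by ring.
      apply Rmult_le_compat_r; [lra|]. apply Rmult_le_compat_r; lra. }
  replace ((Rabs (ln a) + 2) * m - m * ln m) with (Rabs (ln a) * m + m + (m - m * ln m)) by ring.
  rewrite !exp_plus, Rmult_assoc. unfold Rdiv.
  apply Rmult_le_compat; [apply pow_le; lra | left; apply Rinv_0_lt_compat; exact Hfk | exact Hpow | exact Hinv].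
Qed.

Definition rate (r : R) : R := sqrt (2 * r * ln r).

Definition rel_err (D r : R) : R := (2 * ln (ln r) + 2 * D) / ln r.

Lemma rate_sqr r : 0 <= r -> 0 <= ln r -> rate r * rate r = 2 * r * ln r.
Proof. intros Hr Ht. apply sqrt_sqrt. nra. Qed.

Lemma rate_pos r : 0 < r -> 0 < ln r -> 0 < rate r.
Proof. intros Hr Ht. apply sqrt_lt_R0. nra. Qed.

(* Splitting at m = sqrt r / ln r: above it, ln m >= ln r / 2 - ln (ln r) and
   AM-GM applies; below it, the term r / m alone is already too large. *)
Lemma exponent_le_rate D r m :
  0 <= D -> 0 < r -> 64 <= ln r -> 8 * D <= ln r -> 1 <= m ->
  D * m - m * ln m - r / m <= - rate r * (1 - rel_err D r).
Proof.
  intros HD Hr Ht HDt Hm. unfold rel_err.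
  assert (HL2 : rate r * rate r = 2 * r * ln r) by (apply rate_sqr; lra).
  assert (HL0 : 0 <= rate r) by apply sqrt_pos.
  assert (Hs : sqrt r * sqrt r = r) by (apply sqrt_sqrt; lra).
  assert (Hs0 : 0 < sqrt r) by (apply sqrt_lt_R0; lra).
  assert (Hls : ln (sqrt r) = ln r / 2) by (rewrite <- Hs at 2; rewrite ln_mult; lra).
  set (t := ln r) in *. set (L := rate r) in *. set (s := sqrt r) in *.
  clearbody t L s.
  assert (Hlnt : ln t <= t / 4).
  { replace (t / 4) with (1 / 4 * t) by field. apply ln_le_mul; lra. }
  assert (Hlnt0 : 0 <= ln t) by (rewrite <- ln_1; apply ln_le; lra).
  set (q := 1 - (2 * ln t + 2 * D) / t).
  assert (Hq : q * t = 2 * (t / 2 - ln t - D)) by (unfold q; field; lra).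
  clearbody q. set (a := t / 2 - ln t - D) in *.
  assert (Ha : a = t / 2 - ln t - D) by reflexivity. clearbody a.
  assert (Ha0 : 0 < a) by lra.
  assert (Hq1 : 0 <= q <= 1) by (split; nra).
  assert (Hrm : r / m * m = r) by (field; lra).
  destruct (Rle_lt_dec (s / t) m) as [Hsm | Hsm].
  - assert (Hlnm : t / 2 - ln t <= ln m).
    { rewrite <- Hls, <- ln_div by lra. apply ln_le; [apply Rdiv_lt_0_compat|]; lra. }
    assert (Hamgm : L * q <= a * m + r / m).
    { apply le_add_of_sqr_le_4mul; [nra | apply Rdiv_le_0_compat; lra |].
      replace (4 * (a * m) * (r / m)) with (4 * a * r) by (field; lra).
      replace (L * q * (L * q)) with (2 * r * q * (q * t))
        by (replace (2 * r * q * (q * t)) with (2 * r * t * q * q) by ring; rewrite <- HL2; ring).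
      rewrite Hq. assert (0 <= a * r) by nra. nra. }
    nra.
  - assert (Hlnm : 0 <= ln m) by (rewrite <- ln_1; apply ln_le; lra).
    assert (Hmt : m * t < s).
    { apply (Rmult_lt_compat_r t) in Hsm; [|lra]. unfold Rdiv in Hsm.
      rewrite Rmult_assoc, Rinv_l, Rmult_1_r in Hsm by lra. exact Hsm. }
    assert (Hrm_ge : s * t <= r / m) by nra.
    assert (HDm : D * m <= D * s / t).
    { apply (Rmult_le_reg_r t); [lra|]. replace (D * s / t * t) with (D * s) by (field; lra). nra. }
    assert (HLs : L <= s * t - D * s / t).
    { assert (HDs : D * s / t <= s / 8).
      { apply (Rmult_le_reg_r t); [lra|]. replace (D * s / t * t) with (D * s) by (field; lra). nra. }
      assert (Hsq : 2 * t <= (t - 1 / 8) * (t - 1 / 8)) by nra.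
      assert (HL2' : L * L <= (s * t - s / 8) * (s * t - s / 8)).
      { rewrite HL2, <- Hs.
        replace ((s * t - s / 8) * (s * t - s / 8)) with (s * s * ((t - 1 / 8) * (t - 1 / 8))) by field.
        nra. }
      assert (0 <= s * t - s / 8) by nra.
      apply le_of_sqr_le; [lra|]. apply (Rle_trans _ _ _ HL2'). apply Rmult_le_compat; lra. }
    nra.
Qed.

Lemma fact_le_pow n : INR (fact n) <= INR n ^ n.
Proof.
  induction n as [|n IH]; [simpl; lra|].
  rewrite fact_simpl, mult_INR, <- tech_pow_Rmult.
  apply Rmult_le_compat_l; [apply pos_INR|].
  apply (Rle_trans _ _ _ IH), pow_incr. split; [apply pos_INR | apply le_INR; lia].
Qed.

Lemma Series_ge_term (a : nat -> R) K :
  (forall n, 0 <= a n) -> ex_series a -> a K <= Series a.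
Proof.
  intros Ha Hex.
  rewrite (Series_incr_n a (Datatypes.S K)) by (lia || exact Hex). simpl Nat.pred.
  assert (Hhead : a K <= sum_f_R0 a K).
  { destruct K; simpl; [lra|]. pose proof (cond_pos_sum a K Ha). lra. }
  assert (Htail : 0 <= Series (fun k => a (Datatypes.S K + k)%nat)).
  { rewrite <- (Rmult_0_l (Series (fun k => a (Datatypes.S K + k)%nat))), <- Series_scal_l.
    apply Series_le.
    - intros n. rewrite Rmult_0_l. split; [lra | apply Ha].
    - apply ex_series_incr_n, Hex. }
  lra.
Qed.

Section PoissonMixture.

Variable c : R.
Hypothesis hc : 0 < c.

Lemma term_pos r k : 0 < term c r k.
Proof.
  unfold term. repeat apply Rmult_lt_0_compat; try apply exp_pos.
  - apply pow_lt, hc.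
  - apply Rinv_0_lt_compat, lt_0_INR, lt_O_fact.
Qed.

Lemma ex_series_term r : ex_series (term c r).
Proof.
  assert (Hexp : ex_series (fun k => c ^ k / INR (fact k))).
  { exists (exp c). eapply is_series_ext; [|apply (is_exp_Reals c)].
    intros k. rewrite pow_n_pow. reflexivity. }
  apply (@ex_series_le R_AbsRing R_CompleteNormedModule _
           (fun k => exp (- c) * exp (Rabs r) * (c ^ k / INR (fact k)))).
  - intros k. change (norm (term c r k)) with (Rabs (term c r k)).
    rewrite Rabs_pos_eq by (left; apply term_pos).
    unfold term. rewrite (Rmult_comm (exp (- c) * exp (Rabs r))), Rmult_assoc.
    apply Rmult_le_compat_l; [left; apply Rdiv_lt_0_compat; [apply pow_lt, hc | apply lt_0_INR, lt_O_fact]|].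
    apply Rmult_le_compat_l; [left; apply exp_pos|]. apply exp_le_compat.
    assert (Hm : 1 <= INR (k + 1)) by (apply (le_INR 1); lia).
    pose proof (Rabs_pos r). pose proof (Rle_abs (- r)). rewrite Rabs_Ropp in *.
    apply (Rmult_le_reg_r (INR (k + 1))); [lra|].
    unfold Rdiv. rewrite Rmult_assoc, Rinv_l by lra. nra.
  - exact (ex_series_scal_l (exp (- c) * exp (Rabs r)) _ Hexp).
Qed.

Lemma term_le_S r k : term c r k <= S c r.
Proof.
  apply Series_ge_term; [intros n; left; apply term_pos | apply ex_series_term].
Qed.

Lemma S_le_exp r B :
  (forall k, (Rabs (ln (2 * c)) + 2) * INR (k + 1) - INR (k + 1) * ln (INR (k + 1))
             - r / INR (k + 1) <= B) ->
  S c r <= 2 * exp (- c) * exp B.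
Proof.
  intros HB.
  set (M := exp (- c) * exp B).
  (* c^k = (1/2)^k (2c)^k: the weight bound for 2c leaves a geometric factor *)
  assert (Hterm : forall k, 0 <= term c r k <= (1 / 2) ^ k * M).
  { intros k. split; [left; apply term_pos|].
    set (m := INR (k + 1)).
    assert (Hw : (2 * c) ^ k / INR (fact k) * exp (- r / m) <= exp B).
    { apply (Rle_trans _ (exp ((Rabs (ln (2 * c)) + 2) * m - m * ln m) * exp (- r / m))).
      - apply Rmult_le_compat_r; [left; apply exp_pos | apply pow_div_fact_le; lra].
      - rewrite <- exp_plus. apply exp_le_compat.
        replace (- r / m) with (- (r / m)) by (unfold Rdiv; ring). apply HB. }
    unfold term, M. fold m.
    replace (c ^ k) with ((1 / 2) ^ k * (2 * c) ^ k) by (rewrite <- Rpow_mult_distr; f_equal; field).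
    replace ((1 / 2) ^ k * (2 * c) ^ k / INR (fact k) * exp (- c) * exp (- r / m))
      with ((1 / 2) ^ k * exp (- c) * ((2 * c) ^ k / INR (fact k) * exp (- r / m)))
      by (unfold Rdiv; ring).
    rewrite <- (Rmult_assoc ((1 / 2) ^ k)).
    apply Rmult_le_compat_l; [|exact Hw].
    apply Rmult_le_pos; [apply pow_le; lra | left; apply exp_pos]. }
  assert (Hgeom : ex_series (fun k => (1 / 2) ^ k * M)).
  { apply ex_series_scal_r. exists (/ (1 - 1 / 2)). apply is_series_geom.
    rewrite Rabs_pos_eq; lra. }
  unfold S. apply (Rle_trans _ _ _ (Series_le _ _ Hterm Hgeom)).
  rewrite Series_scal_r, Series_geom by (rewrite Rabs_pos_eq; lra).
  unfold M. right. field.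
Qed.

Lemma ln_S_le r :
  0 < r -> 64 <= ln r -> 8 * (Rabs (ln (2 * c)) + 2) <= ln r ->
  ln (S c r) <= ln 2 - c - rate r * (1 - rel_err (Rabs (ln (2 * c)) + 2) r).
Proof.
  intros Hr Ht HDt.
  assert (HD : 0 <= Rabs (ln (2 * c)) + 2) by (pose proof (Rabs_pos (ln (2 * c))); lra).
  assert (HS : S c r <= 2 * exp (- c) * exp (- rate r * (1 - rel_err (Rabs (ln (2 * c)) + 2) r))).
  { apply S_le_exp. intros k.
    apply exponent_le_rate; [exact HD | exact Hr | exact Ht | exact HDt | apply (le_INR 1); lia]. }
  assert (HS0 : 0 < S c r) by (apply (Rlt_le_trans _ _ _ (term_pos r 0)), term_le_S).
  apply (Rle_trans _ _ _ (ln_le _ _ HS0 HS)).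
  rewrite !ln_mult, !ln_exp by (try apply Rmult_lt_0_compat; try apply exp_pos; lra).
  lra.
Qed.

Lemma term_ge r K :
  0 < r -> 1 <= ln r -> c * ln r <= rate r -> INR K <= rate r / ln r <= INR K + 1 ->
  exp (- rate r - c - (Rabs (ln c) + 1) * (rate r / ln r)) <= term c r K.
Proof.
  intros Hr Ht Hct [HK1 HK2].
  assert (HL2 : rate r * rate r = 2 * r * ln r) by (apply rate_sqr; lra).
  assert (HL0 : 0 < rate r) by (apply rate_pos; lra).
  assert (Hxt : rate r / ln r * ln r = rate r) by (field; lra).
  set (x := rate r / ln r) in *. clearbody x.
  set (t := ln r) in *. set (L := rate r) in *.
  assert (Htr : ln r = t) by reflexivity. clearbody t L.
  assert (Hx0 : 0 < x) by nra.
  assert (Hcx : c <= x) by nra.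
  assert (HLx : L * x = 2 * r) by nra.
  assert (Hdecay : - L / 2 <= - r / INR (K + 1)).
  { rewrite plus_INR. simpl INR.
    apply (Rmult_le_reg_r (INR K + 1)); [lra|].
    replace (- r / (INR K + 1) * (INR K + 1)) with (- r) by (field; lra). nra. }
  assert (Hweight : exp (x * (ln c - ln x)) <= c ^ K / INR (fact K)).
  { assert (Hfx : INR (fact K) <= x ^ K).
    { apply (Rle_trans _ _ _ (fact_le_pow K)), pow_incr. split; [apply pos_INR | exact HK1]. }
    assert (Hlncx : ln c <= ln x) by (apply ln_le; lra).
    apply Rle_trans with (c ^ K / x ^ K).
    - rewrite <- (exp_ln (c ^ K)), <- (exp_ln (x ^ K)) by (apply pow_lt; lra).
      rewrite !ln_pow by lra. unfold Rdiv. rewrite <- exp_Ropp, <- exp_plus.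
      apply exp_le_compat. nra.
    - apply Rmult_le_compat_l; [apply pow_le; lra|].
      apply Rinv_le_contravar; [apply lt_0_INR, lt_O_fact | exact Hfx]. }
  assert (Hlnx : 2 * ln x <= 1 + t).
  { assert (Hx2 : x * x <= 2 * r) by nra.
    assert (Hln2 : ln 2 <= 1) by (pose proof (ln_le_sub_one 2); lra).
    replace (2 * ln x) with (ln (x * x)) by (rewrite ln_mult; lra).
    apply (Rle_trans _ (ln (2 * r))); [apply ln_le; nra|].
    rewrite ln_mult, Htr by lra. lra. }
  assert (Hexponent : - L - c - (Rabs (ln c) + 1) * x <= x * (ln c - ln x) + - c + - L / 2).
  { pose proof (Rle_abs (- ln c)) as Habs. rewrite Rabs_Ropp in Habs. nra. }
  apply (Rle_trans _ _ _ (exp_le_compat _ _ Hexponent)).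
  rewrite !exp_plus. unfold term.
  apply Rmult_le_compat.
  - apply Rmult_le_pos; left; apply exp_pos.
  - left; apply exp_pos.
  - apply Rmult_le_compat_r; [left; apply exp_pos | exact Hweight].
  - apply exp_le_compat, Hdecay.
Qed.

Lemma ln_S_ge r :
  0 < r -> 1 <= ln r -> c * ln r <= rate r ->
  - rate r - c - (Rabs (ln c) + 1) * (rate r / ln r) <= ln (S c r).
Proof.
  intros Hr Ht Hct.
  assert (Hx0 : 0 <= rate r / ln r) by (apply Rdiv_le_0_compat; [apply sqrt_pos | lra]).
  destruct (nfloor_ex _ Hx0) as [K [HK1 HK2]].
  rewrite <- (ln_exp (- rate r - c - _)).
  apply ln_le; [apply exp_pos|].
  apply (Rle_trans _ _ _ (term_ge r K Hr Ht Hct (conj HK1 (Rlt_le _ _ HK2)))), term_le_S.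
Qed.

Lemma ratio_bounds r :
  0 < r -> 64 <= ln r -> 8 * (Rabs (ln (2 * c)) + 2) <= ln r -> c * ln r <= rate r ->
  1 - rel_err (Rabs (ln (2 * c)) + 2) r + (c - ln 2) * / rate r <= ln (S c r) / - rate r
  <= 1 + c * / rate r + (Rabs (ln c) + 1) * / ln r.
Proof.
  intros Hr Ht HDt Hct.
  pose proof (ln_S_le r Hr Ht HDt) as Hup.
  pose proof (ln_S_ge r Hr ltac:(lra) Hct) as Hlow.
  assert (HL0 : 0 < rate r) by (apply rate_pos; lra).
  split; apply (Rmult_le_reg_r (rate r)); try exact HL0;
    replace (ln (S c r) / - rate r * rate r) with (- ln (S c r)) by (field; lra).
  - replace ((1 - rel_err (Rabs (ln (2 * c)) + 2) r + (c - ln 2) * / rate r) * rate r)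
      with (rate r * (1 - rel_err (Rabs (ln (2 * c)) + 2) r) + c - ln 2) by (field; lra).
    lra.
  - replace ((1 + c * / rate r + (Rabs (ln c) + 1) * / ln r) * rate r)
      with (rate r + c + (Rabs (ln c) + 1) * (rate r / ln r)) by (field; lra).
    lra.
Qed.

End PoissonMixture.

Lemma eventually_ln_ge M : Rbar_locally' p_infty (fun r => M <= ln r).
Proof.
  apply (filter_imp (fun r => M < ln r)); [intros r; lra|].
  exact (proj2 (is_lim_spec _ _ _) is_lim_ln_p M).
Qed.

Lemma eventually_pos : Rbar_locally' p_infty (fun r => 0 < r).
Proof. exists 0. tauto. Qed.

(* ln r / r -> 0 gives c^2 ln r <= 2 r, i.e. (c ln r)^2 <= rate r ^ 2. *)
Lemma eventually_mul_ln_le_rate c : 0 < c -> Rbar_locally' p_infty (fun r => c * ln r <= rate r).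
Proof.
  intros hc.
  assert (Heps : 0 < 2 / (c * c)) by (apply Rdiv_lt_0_compat; nra).
  pose proof (proj2 (is_lim_spec _ _ _) is_lim_div_ln_p (mkposreal _ Heps)) as Hsmall.
  apply (filter_imp (fun r => 1 < r /\ Rabs (ln r / r - 0) < 2 / (c * c))).
  2: { apply filter_and; [exists 1; tauto | exact Hsmall]. }
  intros r [Hr Hlt]. simpl in Hlt.
  assert (Hln : 0 < ln r) by (rewrite <- ln_1; apply ln_increasing; lra).
  rewrite Rminus_0_r, Rabs_pos_eq in Hlt by (apply Rdiv_le_0_compat; lra).
  assert (Hc2 : c * c * ln r <= 2 * r).
  { apply (Rmult_lt_compat_l (c * c * r)) in Hlt; [|nra].
    replace (c * c * r * (ln r / r)) with (c * c * ln r) in Hlt by (field; lra).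
    replace (c * c * r * (2 / (c * c))) with (2 * r) in Hlt by (field; lra). lra. }
  apply le_of_sqr_le; [apply sqrt_pos|].
  rewrite rate_sqr by lra. nra.
Qed.

Lemma is_lim_inv_ln : is_lim (fun r => / ln r) p_infty 0.
Proof. exact (is_lim_inv _ _ _ is_lim_ln_p ltac:(discriminate)). Qed.

Lemma is_lim_rate : is_lim rate p_infty p_infty.
Proof.
  apply (is_lim_le_p_loc (fun r => sqrt (r * ln r))).
  - exists 1. intros r Hr. apply sqrt_le_1_alt.
    assert (0 < ln r) by (rewrite <- ln_1; apply ln_increasing; lra). nra.
  - apply is_lim_sqrt_p. exact (is_lim_mult _ _ _ _ _ (is_lim_id p_infty) is_lim_ln_p I).
Qed.

Lemma is_lim_inv_rate : is_lim (fun r => / rate r) p_infty 0.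
Proof. exact (is_lim_inv _ _ _ is_lim_rate ltac:(discriminate)). Qed.

Lemma is_lim_rel_err D : is_lim (rel_err D) p_infty 0.
Proof.
  assert (Hlnln : is_lim (fun r => ln (ln r) / ln r) p_infty 0).
  { apply (is_lim_comp (fun y => ln y / y) ln p_infty 0 p_infty is_lim_div_ln_p is_lim_ln_p).
    exists 0. intros r _. discriminate. }
  apply (is_lim_ext (fun r => 2 * (ln (ln r) / ln r) + 2 * D * / ln r)).
  { intros r. unfold rel_err, Rdiv. ring. }
  replace (Finite 0) with (Finite (2 * 0 + 2 * D * 0)) by (f_equal; ring).
  apply is_lim_plus'; [exact (is_lim_scal_l _ 2 _ _ Hlnln) | exact (is_lim_scal_l _ (2 * D) _ _ is_lim_inv_ln)].
Qed.

Theorem lemma1 (c : R) (hc : 0 < c) :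
  is_lim (fun r => ln (S c r) / (- sqrt (2 * r * ln r))) p_infty 1.
Proof.
  apply (is_lim_le_le_loc
           (fun r => 1 - rel_err (Rabs (ln (2 * c)) + 2) r + (c - ln 2) * / rate r)
           (fun r => 1 + c * / rate r + (Rabs (ln c) + 1) * / ln r)).
  - apply (filter_imp (fun r => 0 < r /\ (64 <= ln r /\ 8 * (Rabs (ln (2 * c)) + 2) <= ln r)
                                 /\ c * ln r <= rate r)).
    + intros r [Hr [[Ht HDt] Hct]]. exact (ratio_bounds c hc r Hr Ht HDt Hct).
    + repeat apply filter_and; auto using eventually_pos, eventually_ln_ge,
        eventually_mul_ln_le_rate.
  - replace (Finite 1) with (Finite (1 - 0 + (c - ln 2) * 0)) by (f_equal; ring).
    apply is_lim_plus'; [apply is_lim_minus'; [apply is_lim_const | apply is_lim_rel_err] |].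
    exact (is_lim_scal_l _ (c - ln 2) _ _ is_lim_inv_rate).
  - replace (Finite 1) with (Finite (1 + c * 0 + (Rabs (ln c) + 1) * 0)) by (f_equal; ring).
    apply is_lim_plus'; [apply is_lim_plus'; [apply is_lim_const |] |].
    + exact (is_lim_scal_l _ c _ _ is_lim_inv_rate).
    + exact (is_lim_scal_l _ (Rabs (ln c) + 1) _ _ is_lim_inv_ln).
Qed.
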